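(* Let $G_1$ and $G_2$ be two connected graphs, each of diameter at most two. Then $\chi_L(G_1+G_2)=\chi_L(G_1)+\chi_L(G_2)$.
   Context: All graphs are finite, simple (no loops or multiple edges). A proper $k$-coloring of $G$ is a map $f$ from $V(G)$ onto $[k]=\{1,\dots,k\}$ such that adjacent vertices receive different colors. For a connected graph $G$ with proper $k$-coloring $f$, let $V_i=f^{-1}(i)$ and $\Pi=(V_1,\dots,V_k)$; the color code of a vertex $v$ is $c_\Pi(v)=(d(v,V_1),\dots,d(v,V_k))$, where $d(v,S)=\min_{x\in S} d(v,x)$. The coloring $f$ is a locating coloring if distinct vertices have distinct color codes; the locating chromatic number $\chi_L(G)$ is the minimum number of colors in a locating coloring of $G$. The join $G_1+G_2$ is the graph on $V(G_1)\cup V(G_2)$ (disjoint) with edge set $E(G_1)\cup E(G_2)\cup\{uv: u\in V(G_1), v\in V(G_2)\}$. *)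

From mathcomp Require Import all_boot.
Set Implicit Arguments. Unset Strict Implicit. Unset Printing Implicit Defensive.

Section Graphs.
Variable T : finType.
Implicit Types (e : rel T).

Definition simple_graph e := symmetric e /\ irreflexive e.

Fixpoint reach e (n : nat) (u v : T) : bool :=
  match n with
  | 0 => u == v
  | n'.+1 => reach e n' u v || [exists w, reach e n' u w && e w v]
  end.

Definition connected_graph e := 0 < #|T| /\ forall u v : T, connect e u v.

(* d(v,S) = min_{x in S} d(v,x): least n such that some x in S is within
   distance n of v (searched among 0..#|T|-1, which suffices for connected
   graphs and nonempty S). *)
Definition sdist e (S : {set T}) (v : T) : nat :=
  find (fun n => [exists x in S, reach e n v x]) (iota 0 #|T|).

Definition dist e (u v : T) : nat := sdist e [set v] u.

Definition diameter_le e (d : nat) := forall u v : T, dist e u v <= d.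

Definition proper_coloring e k (f : T -> 'I_k) :=
  (forall u v, e u v -> f u != f v) /\ (forall i : 'I_k, exists v, f v = i).

Definition color_code e k (f : T -> 'I_k) (v : T) : 'I_k -> nat :=
  fun i => sdist e [set x | f x == i] v.

Definition locating_coloring e k (f : T -> 'I_k) :=
  proper_coloring e f /\
  forall u v, (forall i, color_code e f u i = color_code e f v i) -> u = v.

Definition is_locating_chromatic_number e (k : nat) :=
  (exists f : T -> 'I_k, locating_coloring e f) /\
  (forall k' (f : T -> 'I_k'), locating_coloring e f -> k <= k').

End Graphs.

Definition join_rel (T1 T2 : finType) (e1 : rel T1) (e2 : rel T2) : rel (T1 + T2)%type :=
  fun x y => match x, y with
             | inl a, inl b => e1 a b
             | inr a, inr b => e2 a b
             | _, _ => true
             end.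

(* In a join every vertex is adjacent to the whole other side, so every vertex is within
   distance 2 of every nonempty set, and a color code only records, for each color class,
   whether the vertex lies in it, is adjacent to it, or neither ([sdist2]).  A color class
   of a proper coloring of the join lies on one side; seen from that side it gives the
   distance in G_i truncated at 2, seen from the other side it gives 1.  Hence the colors
   used on either side of a locating coloring of the join form a locating coloring of that
   side, which gives the lower bound.  Conversely, when diam G_i <= 2 the distances in G_i
   are already at most 2, so optimal locating colorings of G_1 and G_2 on disjoint palettes
   combine into a locating coloring of the join. *)

From mathcomp Require Import all_boot zify.
Set Implicit Arguments. Unset Strict Implicit. Unset Printing Implicit Defensive.

Section SetDistance.
Variables (T : finType) (e : rel T).
Implicit Types (S : {set T}) (u v w x : T).

Definition sdist2 S v := if v \in S then 0 else if [exists x in S, e v x] then 1 else 2.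

Lemma reach_le m n u v : m <= n -> reach e m u v -> reach e n u v.
Proof.
move=> /subnK <-; elim: (n - m) => [|d IH] r //.
by rewrite addSn /= IH.
Qed.

Lemma reach1E u v : reach e 1 u v = (u == v) || e u v.
Proof.
rewrite /=; congr orb; apply/existsP/idP => [[w /andP[/eqP -> //]] | euv].
by exists u; rewrite eqxx.
Qed.

Lemma reach_edge u w v : e u w -> e w v -> reach e 2 u v.
Proof.
move=> euw ewv; apply/orP; right; apply/existsP; exists w.
rewrite ewv andbT; apply/orP; right; apply/existsP; exists u.
by rewrite eqxx.
Qed.

Lemma sdist_le_card S v : sdist e S v <= #|T|.
Proof. by rewrite /sdist; apply: leq_trans (find_size _ _) _; rewrite size_iota. Qed.

Lemma sdist_le S v x n : x \in S -> reach e n v x -> sdist e S v <= n.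
Proof.
move=> xS r; have [n_lt|] := ltnP n #|T|; last exact: leq_trans (sdist_le_card S v).
rewrite leqNgt; apply/negP => /(before_find 0); rewrite nth_iota // add0n.
by move/negbT/existsPn/(_ x); rewrite xS r.
Qed.

Lemma sdist_leE S v n : n < #|T| -> (sdist e S v <= n) = [exists x in S, reach e n v x].
Proof.
move=> n_lt; apply/idP/existsP => [le | [x /andP[xS r]]]; last exact: sdist_le xS r.
have /(nth_find 0) : has (fun m => [exists x in S, reach e m v x]) (iota 0 #|T|).
  by rewrite has_find size_iota; exact: leq_ltn_trans le n_lt.
rewrite nth_iota ?add0n; last exact: leq_ltn_trans le n_lt.
by move=> /existsP[x /andP[xS r]]; exists x; rewrite xS (reach_le le).
Qed.

Lemma sdist_eq0 S v : (sdist e S v == 0) = (v \in S).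
Proof.
have T_gt0 : 0 < #|T| by apply/card_gt0P; exists v.
rewrite -leqn0 sdist_leE //; apply/existsP/idP => [[x /andP[xS /eqP ->]] // | vS].
by exists v; rewrite vS /=.
Qed.

Lemma minn_sdist2 S v : S != set0 -> minn (sdist e S v) 2 = sdist2 S v.
Proof.
move=> /set0Pn[x xS]; rewrite /sdist2; case: ifPn => [vS | vS].
  by move: vS; rewrite -sdist_eq0 => /eqP ->.
have T_gt1 : 1 < #|T| by apply/card_gt1P; exists v, x; split=> //; apply: contraNneq vS => ->.
have sdist_gt0 : sdist e S v != 0 by rewrite sdist_eq0.
have sdist_le1 : (sdist e S v <= 1) = [exists x in S, e v x].
  rewrite sdist_leE //; apply: eq_existsb => y; rewrite reach1E.
  by case: eqVneq => [<- | _]; rewrite ?(negbTE vS).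
by case: ifP => adj; move: sdist_gt0 sdist_le1; rewrite adj; lia.
Qed.

Lemma sdist_sdist2 S v : S != set0 -> sdist e S v <= 2 -> sdist e S v = sdist2 S v.
Proof. by move=> S0 le2; rewrite -minn_sdist2 //; apply/esym/minn_idPl. Qed.

Lemma sdist_subset S S' v : S \subset S' -> sdist e S' v <= sdist e S v.
Proof.
move=> sSS'; have [lt | ] := ltnP (sdist e S v) #|T|; last exact: leq_trans (sdist_le_card _ _).
have /existsP[x /andP[xS r]] : [exists x in S, reach e (sdist e S v) v x] by rewrite -sdist_leE.
exact: sdist_le (subsetP sSS' x xS) r.
Qed.

Lemma sdist_le_dist S v x : x \in S -> sdist e S v <= dist e v x.
Proof. by move=> xS; apply: sdist_subset; rewrite sub1set. Qed.

Lemma color_code_eq_color k (f : T -> 'I_k) u v :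
  (forall i, color_code e f u i = color_code e f v i) -> f u = f v.
Proof.
move=> /(_ (f u)); rewrite /color_code => codes; apply/esym/eqP.
by have := sdist_eq0 [set x | f x == f u] v; rewrite -codes sdist_eq0 !inE eqxx.
Qed.

End SetDistance.

Section DominatedEmbedding.
Variables (T U : finType) (e : rel T) (E : rel U) (h : T -> U).
Hypotheses (h_inj : injective h) (h_edge : forall x y, E (h x) (h y) = e x y).
Hypothesis h_dom : forall x u, u \notin codom h -> E (h x) u.

Lemma sdist2_embed (S : {set U}) x :
  S \subset codom h -> sdist2 E S (h x) = sdist2 e (h @^-1: S) x.
Proof.
move=> Sh; rewrite /sdist2 inE.
suff -> : [exists u in S, E (h x) u] = [exists y in h @^-1: S, e x y] by [].
apply/existsP/existsP => [[u /andP[uS ehu]] | [y /andP[]]].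
  by have /codomP[y uy] := subsetP Sh u uS; exists y; rewrite inE -uy uS -h_edge -uy.
by rewrite inE => yS exy; exists (h y); rewrite yS h_edge.
Qed.

Lemma sdist2_dom (S : {set U}) x :
  S != set0 -> [disjoint S & codom h] -> sdist2 E S (h x) = 1.
Proof.
move=> /set0Pn[u uS] Sh; rewrite /sdist2 (disjointFl Sh (codom_f h x)).
suff -> : [exists u in S, E (h x) u] by [].
by apply/existsP; exists u; rewrite uS h_dom // (disjointFr Sh uS).
Qed.

Hypothesis E_sdist2 : forall (S : {set U}) u, S != set0 -> sdist E S u = sdist2 E S u.

Section Restriction.
Variables (k : nat) (F : U -> 'I_k) (x0 : T).
Hypothesis F_loc : locating_coloring E F.

Definition embed_colors := [set F (h x) | x : T].

Lemma restrict_locating : exists f : T -> 'I_#|embed_colors|, locating_coloring e f.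
Proof.
have [[F_proper F_onto] F_inj] := F_loc.
have Fx0 : F (h x0) \in embed_colors by rewrite imset_f.
pose f x := enum_rank_in Fx0 (F (h x)).
have fK x : enum_val (f x) = F (h x) by rewrite enum_rankK_in ?imset_f.
have class_nonempty i : [set u | F u == i] != set0.
  by apply/set0Pn; have [u <-] := F_onto i; exists u; rewrite inE.
exists f; split; [split|].
- move=> x y exy; rewrite -(inj_eq enum_val_inj) !fK.
  by apply: F_proper; rewrite h_edge.
- by move=> j; have /imsetP[x _ ej] := enum_valP j; exists x; rewrite /f -ej enum_valK_in.
move=> x y codes; apply: h_inj; apply: F_inj => i; rewrite /color_code.
rewrite !E_sdist2 //.
have [/imsetP[z _ ->] | iC] := boolP (i \in embed_colors).
  have classE : h @^-1: [set u | F u == F (h z)] = [set w | f w == f z].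
    by apply/setP => w; rewrite !inE -(inj_eq enum_val_inj) !fK.
  have class_sub : [set u | F u == F (h z)] \subset codom h.
    apply/subsetP => u; rewrite inE => /eqP Fu; apply: contraT => /(h_dom z) Ehu.
    by have := F_proper _ _ Ehu; rewrite Fu eqxx.
  have fclass_nonempty : [set w | f w == f z] != set0 by apply/set0Pn; exists z; rewrite inE.
  rewrite !sdist2_embed // classE -!minn_sdist2 //.
  by have := codes (f z); rewrite /color_code => ->.
have class_disj : [disjoint [set u | F u == i] & codom h].
  rewrite disjoint_subset; apply/subsetP => u; rewrite !inE => /eqP Fu.
  by apply: contra iC => /codomP[w uw]; rewrite -Fu uw imset_f.
by rewrite !sdist2_dom.
Qed.

End Restriction.

Section Extension.
Variables (m k : nat) (f : T -> 'I_m) (F : U -> 'I_k) (c : 'I_m -> 'I_k).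
Hypotheses (f_loc : locating_coloring e f) (e_diam : diameter_le e 2).
Hypotheses (c_inj : injective c) (F_h : forall x, F (h x) = c (f x)).
Hypothesis F_off : forall u j, u \notin codom h -> F u != c j.

Lemma extend_locating x y :
  (forall i, color_code E F (h x) i = color_code E F (h y) i) -> x = y.
Proof.
have [[_ f_onto] f_inj] := f_loc.
move=> codes; apply: f_inj => j; rewrite /color_code.
have [z fz] := f_onto j.
have fclass_nonempty : [set w | f w == j] != set0 by apply/set0Pn; exists z; rewrite inE fz.
have class_nonempty : [set u | F u == c j] != set0.
  by apply/set0Pn; exists (h z); rewrite inE F_h fz.
have class_sub : [set u | F u == c j] \subset codom h.
  by apply/subsetP => u; rewrite inE; apply: contraLR => /F_off->.
have classE : h @^-1: [set u | F u == c j] = [set w | f w == j].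
  by apply/setP => w; rewrite !inE F_h (inj_eq c_inj).
have f_sdist_le2 v : sdist e [set w | f w == j] v <= 2.
  by apply: leq_trans (e_diam v z); apply: sdist_le_dist; rewrite inE fz.
rewrite !(sdist_sdist2 fclass_nonempty (f_sdist_le2 _)) -classE -!sdist2_embed //.
by have := codes (c j); rewrite /color_code !E_sdist2.
Qed.

End Extension.
End DominatedEmbedding.

Section Join.
Variables (T1 T2 : finType) (e1 : rel T1) (e2 : rel T2) (a0 : T1) (b0 : T2).
Local Notation J := (join_rel e1 e2).

Lemma join_reach2 u v : reach J 2 u v.
Proof.
case: u v => [a|b] [c|d].
- exact: (@reach_edge _ _ _ (inr b0)).
- by apply: (@reach_le _ _ 1) => //; rewrite reach1E orbT.
- by apply: (@reach_le _ _ 1) => //; rewrite reach1E orbT.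
- exact: (@reach_edge _ _ _ (inl a0)).
Qed.

Lemma sdist_join (S : {set T1 + T2}) v : S != set0 -> sdist J S v = sdist2 J S v.
Proof.
move=> S0; apply: sdist_sdist2 => //.
by have /set0Pn[x xS] := S0; exact: sdist_le xS (join_reach2 v x).
Qed.

Lemma inl_dom a u : u \notin codom inl -> J (inl a) u.
Proof. by case: u => [c|b] //; rewrite codom_f. Qed.

Lemma inr_dom b u : u \notin codom inr -> J (inr b) u.
Proof. by case: u => [a|c] //; rewrite codom_f. Qed.

Definition join_coloring k1 k2 (f1 : T1 -> 'I_k1) (f2 : T2 -> 'I_k2) (u : T1 + T2) :=
  match u with inl a => lshift k2 (f1 a) | inr b => rshift k1 (f2 b) end.

Lemma join_coloring_locating k1 k2 (f1 : T1 -> 'I_k1) (f2 : T2 -> 'I_k2) :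
  locating_coloring e1 f1 -> locating_coloring e2 f2 ->
  diameter_le e1 2 -> diameter_le e2 2 -> locating_coloring J (join_coloring f1 f2).
Proof.
move=> f1_loc f2_loc d1 d2.
have [[f1_proper f1_onto] _] := f1_loc; have [[f2_proper f2_onto] _] := f2_loc.
split; [split|].
- move=> [a|b] [c|d] /= euv; rewrite ?eq_lshift ?eq_rshift ?eq_lrshift ?eq_rlshift //.
    exact: f1_proper.
  exact: f2_proper.
- move=> i; case: (split_ordP i) => j ->.
    by have [a <-] := f1_onto j; exists (inl a).
  by have [b <-] := f2_onto j; exists (inr b).
move=> u v codes; have := color_code_eq_color codes.
case: u v codes => [a|b] [c|d] codes /= /eqP; rewrite ?eq_lrshift ?eq_rlshift // => _.
  congr inl; apply: (extend_locating _ sdist_join f1_loc d1 (@lshift_inj k1 k2) _ _ codes) => //.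
  by move=> [a'|b'] j; rewrite ?codom_f // eq_rlshift.
congr inr; apply: (extend_locating _ sdist_join f2_loc d2 (@rshift_inj k1 k2) _ _ codes) => //.
by move=> [a'|b'] j; rewrite ?codom_f // eq_lrshift.
Qed.

Lemma join_locating_split k (f : T1 + T2 -> 'I_k) : locating_coloring J f ->
  exists n1 n2, [/\ n1 + n2 <= k,
    exists f1 : T1 -> 'I_n1, locating_coloring e1 f1 &
    exists f2 : T2 -> 'I_n2, locating_coloring e2 f2].
Proof.
move=> f_loc; have [[f_proper _] _] := f_loc.
exists #|embed_colors inl f|, #|embed_colors inr f|; split.
- have disj : embed_colors inl f :&: embed_colors inr f = set0.
    apply/setP => i; rewrite !inE; apply/negbTE/andP => -[/imsetP[a _ ->] /imsetP[b _ fab]].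
    by have := f_proper (inl a) (inr b) isT; rewrite fab eqxx.
  rewrite -cardsUI disj cards0 addn0; apply: leq_trans (max_card _) _.
  by rewrite card_ord.
- exact: (restrict_locating (@inl_inj _ _) (fun _ _ => erefl) inl_dom sdist_join a0 f_loc).
exact: (restrict_locating (@inr_inj _ _) (fun _ _ => erefl) inr_dom sdist_join b0 f_loc).
Qed.

End Join.

Theorem corollary1 (T1 T2 : finType) (e1 : rel T1) (e2 : rel T2) (k1 k2 : nat) :
  simple_graph e1 -> simple_graph e2 ->
  connected_graph e1 -> connected_graph e2 ->
  diameter_le e1 2 -> diameter_le e2 2 ->
  is_locating_chromatic_number e1 k1 ->
  is_locating_chromatic_number e2 k2 ->
  is_locating_chromatic_number (join_rel e1 e2) (k1 + k2).
Proof.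
move=> _ _ [/card_gt0P[a0 _] _] [/card_gt0P[b0 _] _] d1 d2 [[f1 f1_loc] min1] [[f2 f2_loc] min2].
split; first by exists (join_coloring f1 f2); exact: join_coloring_locating.
move=> k f f_loc.
have [n1 [n2 [le_k [g1 /min1 le1] [g2 /min2 le2]]]] := join_locating_split a0 b0 f_loc.
lia.
Qed.
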